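(* Let $N\ge1$, $h=\frac{2\pi}{2N+1}$, $x_\nu=\nu h$ ($\nu=0,\dots,2N$), and let $u_N(x,t)=\sum_{|k|\le N}\widehat u_k(t)e^{ikx}$ solve the $2/3$ de-aliasing pseudo-spectral Fourier method for Burgers' equation, $$\partial_t u_N(x,t)+\tfrac12\partial_x\Big(I_N\big[(\mathcal S u_N)^2\big]\Big)(x,t)=0,\qquad x\in[0,2\pi),$$ where $\mathcal S u_N:=\sum_{|k|\le \frac23 N}\sigma_k\widehat u_k(t)e^{ikx}$. Then the smoothed solution $u_m:=\mathcal S u_N$ (a trigonometric polynomial of degree $m:=\frac23N$) satisfies $$\partial_t u_m(x,t)+\tfrac12\partial_x\,\mathcal S[u_m^2](x,t)=0,$$ where for a $2\pi$-periodic $w$, $\mathcal S w=\sum_{|k|\le m}\sigma_k\widehat w_k e^{ikx}$.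
   Context: $I_N[w]$ denotes the trigonometric interpolant of degree $N$ of a $2\pi$-periodic function $w$ at the $2N+1$ equispaced points $x_\nu$: $I_N[w](x)=\sum_{|k|\le N}\widetilde w(k)e^{ikx}$ with $\widetilde w(k)=\frac{h}{2\pi}\sum_{\nu=0}^{2N}w(x_\nu)e^{-ikx_\nu}$. The smoothing factors satisfy $\sigma_k\in[0,1]$, $\sigma_k=1$ for $|k|\le N/3$, and $\sigma_k=0$ for $|k|>\frac23N$ (e.g. $\sigma_k=\sigma(|k|/N)$ with a smooth mollifier $\sigma\equiv1$ on $[0,\frac13]$, $\sigma\in(0,1)$ on $(\frac13,\frac23)$, $\sigma\equiv0$ on $[\frac23,1]$). $\widehat w_k$ denotes the $k$-th Fourier coefficient. *)

From Stdlib Require Import Reals ZArith.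
From Coquelicot Require Import Coquelicot.
Export Complex.

Open Scope R_scope.

Definition cexpi (k : Z) (x : R) : C := (cos (IZR k * x), sin (IZR k * x)).

Definition sumZN (N : nat) (f : Z -> C) : C :=
  sum_n (fun j : nat => f (Z.of_nat j - Z.of_nat N)%Z) (2 * N).

Definition hN (N : nat) : R := 2 * PI / INR (2 * N + 1).
Definition xnode (N : nat) (nu : nat) : R := INR nu * hN N.

Definition dcoef (N : nat) (w : R -> C) (k : Z) : C :=
  scal (hN N / (2 * PI))
    (sum_n (fun nu : nat => (w (xnode N nu) * cexpi (- k) (xnode N nu))%C) (2 * N)).

Definition interpN (N : nat) (w : R -> C) (x : R) : C :=
  sumZN N (fun k => (dcoef N w k * cexpi k x)%C).

Definition fcoef (w : R -> C) (k : Z) : C :=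
  scal (/ (2 * PI))
    ((RInt (fun x => Re (w x * cexpi (- k) x)%C) 0 (2 * PI),
      RInt (fun x => Im (w x * cexpi (- k) x)%C) 0 (2 * PI)) : C).

Definition smoothing_factors (N : nat) (sigma : Z -> R) : Prop :=
  (forall k, 0 <= sigma k <= 1) /\
  (forall k, 3 * IZR (Z.abs k) <= INR N -> sigma k = 1) /\
  (forall k, 3 * IZR (Z.abs k) > 2 * INR N -> sigma k = 0).

Definition in_m (N : nat) (k : Z) : bool :=
  (3 * Z.abs k <=? 2 * Z.of_nat N)%Z.

Definition smoothS (N : nat) (sigma : Z -> R) (w : R -> C) (x : R) : C :=
  sumZN N (fun k => if in_m N k then (RtoC (sigma k) * fcoef w k * cexpi k x)%C
                     else 0%C).

Definition uNfun (N : nat) (uhat : Z -> R -> C) (x t : R) : C :=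
  sumZN N (fun k => (uhat k t * cexpi k x)%C).

Definition Su (N : nat) (sigma : Z -> R) (uhat : Z -> R -> C) (x t : R) : C :=
  sumZN N (fun k => if in_m N k then (RtoC (sigma k) * uhat k t * cexpi k x)%C
                     else 0%C).

Definition burgers_eq_at (v : R -> R -> C) (F : R -> R -> C) (x t : R) : Prop :=
  exists a b : C,
    is_derive (fun s => v x s) t a /\
    is_derive (fun y => F y t) x b /\
    (a + RtoC (/ 2) * b)%C = 0%C.

(* Every function in sight is a trigonometric polynomial.  On the 2N+1 nodes the sum of
   e^{i m x_nu} vanishes for 0 < |m| <= 2N, so interpolation recovers the coefficients of a
   polynomial of degree N and the collocation equation holds coefficientwise:
   d/dt uhat_k = -(ik/2) w~(k) for |k| <= N, where w = (S u_N)^2.  This is where the 2/3 rule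
   enters: S u_N has frequencies |p| <= 2N/3, so for |k| <= 2N/3 every frequency p + q - k of
   w e^{-ikx} has modulus at most 2N, the rectangle rule on the nodes integrates it exactly, and
   w~(k) = w^_k.  Multiplying the coefficient equations by sigma_k gives the equation for S u_N. *)

From Stdlib Require Import Reals ZArith Lia Lra.
From Coquelicot Require Import Coquelicot.

Lemma is_linear_Cmult_r (c : C) :
  is_linear (U := C_R_NormedModule) (V := C_R_NormedModule) (fun z : C => (z * c)%C).
Proof.
split.
- intros z w. change ((z + w) * c = z * c + w * c)%C. ring.
- intros r z. rewrite !scal_R_Cmult. symmetry. apply Cmult_assoc.
- exists (1 + Cmod c). split.
  + pose proof (Cmod_ge_0 c). lra.
  + intros z. rewrite <- !Cmod_norm, Cmod_mult.
    pose proof (Cmod_ge_0 c); pose proof (Cmod_ge_0 z). nra.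
Qed.

Lemma is_derive_linear {V W : NormedModule R_AbsRing} (L : V -> W) (f : R -> V) (x : R) (l : V) :
  is_linear L -> is_derive f x l -> is_derive (fun y => L (f y)) x (L l).
Proof.
intros HL Hf. eapply filterdiff_ext_lin.
- exact (filterdiff_comp' f L x _ _ Hf (filterdiff_linear _ HL)).
- intros y. simpl. apply (linear_scal L HL).
Qed.

Lemma is_derive_Cmult_r (f : R -> C) (x : R) (l c : C) :
  is_derive f x l -> is_derive (fun y => (f y * c)%C) x (l * c)%C.
Proof. apply (is_derive_linear (fun z : C => (z * c)%C)), is_linear_Cmult_r. Qed.

Lemma is_derive_Cmult_l (f : R -> C) (x : R) (l c : C) :
  is_derive f x l -> is_derive (fun y => (c * f y)%C) x (c * l)%C.
Proof.
intros Hf. rewrite Cmult_comm.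
apply (is_derive_ext (fun y => (f y * c)%C)); [intros; apply Cmult_comm|].
now apply is_derive_Cmult_r.
Qed.

Lemma is_derive_C_unique (f : R -> C) (x : R) (l1 l2 : C) :
  is_derive f x l1 -> is_derive f x l2 -> l1 = l2.
Proof.
intros H1 H2.
apply injective_projections.
- apply (is_derive_linear fst) in H1, H2; try apply is_linear_fst.
  apply is_derive_unique in H1, H2. exact (eq_trans (eq_sym H1) H2).
- apply (is_derive_linear snd) in H1, H2; try apply is_linear_snd.
  apply is_derive_unique in H1, H2. exact (eq_trans (eq_sym H1) H2).
Qed.

Definition Cik (k : Z) : C := (0, IZR k).

Lemma cexpi_at_0 (k : Z) : cexpi k 0 = 1%C.
Proof. unfold cexpi. now rewrite Rmult_0_r, cos_0, sin_0. Qed.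

Lemma cexpi_freq_0 (x : R) : cexpi 0 x = 1%C.
Proof. unfold cexpi. now rewrite Rmult_0_l, cos_0, sin_0. Qed.

Lemma cexpi_at_2PI (k : Z) : cexpi k (2 * PI) = 1%C.
Proof.
assert (Hs : sin (IZR k * PI) = 0) by (apply sin_eq_0_1; now exists k).
unfold cexpi. replace (IZR k * (2 * PI)) with (2 * (IZR k * PI)) by ring.
rewrite cos_2a_sin, sin_2a, Hs. apply injective_projections; simpl; ring.
Qed.

Lemma cexpi_freqD (k l : Z) (x : R) : cexpi (k + l) x = (cexpi k x * cexpi l x)%C.
Proof.
unfold cexpi. rewrite plus_IZR, Rmult_plus_distr_r, cos_plus, sin_plus.
apply injective_projections; simpl; ring.
Qed.

Lemma cexpiD (k : Z) (x y : R) : cexpi k (x + y) = (cexpi k x * cexpi k y)%C.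
Proof.
unfold cexpi. rewrite Rmult_plus_distr_l, cos_plus, sin_plus.
apply injective_projections; simpl; ring.
Qed.

Lemma is_derive_cexpi (k : Z) (x : R) : is_derive (cexpi k) x (Cik k * cexpi k x)%C.
Proof.
apply (is_derive_ext
  (fun y => plus (scal (cos (IZR k * y)) (1, 0) : C) (scal (sin (IZR k * y)) (0, 1)))).
{ intros y. rewrite !scal_R_Cmult. unfold cexpi. apply injective_projections; simpl; ring. }
replace (Cik k * cexpi k x)%C
  with (plus (scal (- IZR k * sin (IZR k * x)) (1, 0) : C)
              (scal (IZR k * cos (IZR k * x)) (0, 1))).
2:{ rewrite !scal_R_Cmult. unfold Cik, cexpi. apply injective_projections; simpl; ring. }
apply (is_derive_plus (K := R_AbsRing) (V := C_R_NormedModule));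
  apply (is_derive_scal_l (K := R_AbsRing) (V := C_R_NormedModule)); auto_derive; auto; ring.
Qed.

Lemma sum_n_single {G : AbelianMonoid} (f : nat -> G) (n i : nat) :
  (i <= n)%nat -> (forall j, (j <= n)%nat -> j <> i -> f j = zero) -> sum_n f n = f i.
Proof.
intros Hi Hf. induction n as [|n IH].
- replace i with 0%nat by lia. apply sum_O.
- rewrite sum_Sn. destruct (Nat.eq_dec i (S n)) as [->|Hne].
  + rewrite (sum_n_ext_loc _ (fun _ => zero)) by (intros; apply Hf; lia).
    unfold sum_n. rewrite sum_n_m_const_zero. apply plus_zero_l.
  + rewrite IH, (Hf (S n)) by (lia || (intros; apply Hf; lia)). apply plus_zero_r.
Qed.

Lemma sumZN_ext (N : nat) (f g : Z -> C) :
  (forall k, f k = g k) -> sumZN N f = sumZN N g.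
Proof. intros H. apply sum_n_ext. intros; apply H. Qed.

Lemma sumZN_mult_l (N : nat) (c : C) (f : Z -> C) :
  sumZN N (fun k => (c * f k)%C) = (c * sumZN N f)%C.
Proof. exact (sum_n_mult_l _ _ _). Qed.

Lemma sumZN_mult_r (N : nat) (c : C) (f : Z -> C) :
  sumZN N (fun k => (f k * c)%C) = (sumZN N f * c)%C.
Proof. exact (sum_n_mult_r _ _ _). Qed.

Lemma sumZN_single (N : nat) (f : Z -> C) (k : Z) :
  (Z.abs k <= Z.of_nat N)%Z ->
  (forall p, (Z.abs p <= Z.of_nat N)%Z -> p <> k -> f p = 0%C) -> sumZN N f = f k.
Proof.
intros Hk Hf. unfold sumZN.
rewrite (sum_n_single _ _ (Z.to_nat (k + Z.of_nat N))) by (lia || (intros; apply Hf; lia)).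
f_equal. lia.
Qed.

Definition trig (N : nat) (c : Z -> C) (x : R) : C := sumZN N (fun k => (c k * cexpi k x)%C).

Definition dealias (N : nat) (c : Z -> C) (k : Z) : C := if in_m N k then c k else 0%C.

Lemma trig_scal (N : nat) (c : C) (a : Z -> C) (x : R) :
  (c * trig N a x)%C = trig N (fun k => (c * a k)%C) x.
Proof.
unfold trig. rewrite <- sumZN_mult_l. apply sumZN_ext. intros k. apply Cmult_assoc.
Qed.

Lemma trig_dealias (N : nat) (a : Z -> C) (x : R) :
  sumZN N (fun k => if in_m N k then (a k * cexpi k x)%C else 0%C) = trig N (dealias N a) x.
Proof.
apply sumZN_ext. intros k. unfold dealias. destruct (in_m N k); [reflexivity|]. ring.
Qed.

Lemma Su_trig (N : nat) (sigma : Z -> R) (uhat : Z -> R -> C) (x t : R) :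
  Su N sigma uhat x t = trig N (dealias N (fun k => RtoC (sigma k) * uhat k t)%C) x.
Proof. apply trig_dealias. Qed.

Lemma smoothS_trig (N : nat) (sigma : Z -> R) (w : R -> C) (x : R) :
  smoothS N sigma w x = trig N (dealias N (fun k => RtoC (sigma k) * fcoef w k)%C) x.
Proof. apply trig_dealias. Qed.

Lemma trig_mul (N : nat) (a b : Z -> C) (x : R) :
  (trig N a x * trig N b x)%C
  = sumZN N (fun p => sumZN N (fun q => (a p * b q * cexpi (p + q) x)%C)).
Proof.
unfold trig. rewrite <- sumZN_mult_r. apply sumZN_ext. intros p.
rewrite <- sumZN_mult_l. apply sumZN_ext. intros q.
rewrite cexpi_freqD. ring.
Qed.

Lemma is_derive_trig (N : nat) (c : Z -> C) (x : R) :
  is_derive (trig N c) x (trig N (fun k => (Cik k * c k)%C) x).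
Proof.
replace (trig N _ x) with (sumZN N (fun k => (c k * (Cik k * cexpi k x))%C)).
2:{ apply sumZN_ext. intros k. ring. }
apply (is_derive_sum_n
  (fun j y => (c (Z.of_nat j - Z.of_nat N)%Z * cexpi (Z.of_nat j - Z.of_nat N)%Z y)%C)).
intros j _. apply is_derive_Cmult_l, is_derive_cexpi.
Qed.

Lemma is_derive_trig_coefs (N : nat) (c : Z -> R -> C) (d : Z -> C) (x t : R) :
  (forall k, (Z.abs k <= Z.of_nat N)%Z -> is_derive (c k) t (d k)) ->
  is_derive (fun s => trig N (fun k => c k s) x) t (trig N d x).
Proof.
intros Hc.
apply (is_derive_sum_n
  (fun j s => (c (Z.of_nat j - Z.of_nat N)%Z s * cexpi (Z.of_nat j - Z.of_nat N)%Z x)%C)).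
intros j Hj. apply is_derive_Cmult_r, Hc. lia.
Qed.

Lemma hN_nodes (N : nat) : INR (2 * N + 1) * hN N = 2 * PI.
Proof. unfold hN. field. apply not_0_INR. lia. Qed.

Lemma hN_pos (N : nat) : 0 < hN N.
Proof.
unfold hN. apply Rdiv_lt_0_compat.
- pose proof PI_RGT_0. lra.
- apply lt_0_INR. lia.
Qed.

Definition node_sum (N : nat) (m : Z) : C := sum_n (fun nu => cexpi m (xnode N nu)) (2 * N).

Lemma node_sum_0 (N : nat) : node_sum N 0 = RtoC (INR (2 * N + 1)).
Proof.
unfold node_sum. replace (2 * N + 1)%nat with (S (2 * N)) by lia.
induction (2 * N)%nat as [|n IH].
- now rewrite sum_O, cexpi_freq_0.
- rewrite sum_Sn, IH, cexpi_freq_0, (S_INR (S n)), RtoC_plus. reflexivity.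
Qed.

(* Multiplication by e^{imh} shifts the nodes by one, and x_{2N+1} = 2 pi closes the cycle. *)
Lemma node_sum_shift (N : nat) (m : Z) :
  (cexpi m (hN N) * node_sum N m)%C = node_sum N m.
Proof.
set (f := fun nu => cexpi m (xnode N nu)).
assert (Hshift : (cexpi m (hN N) * node_sum N m)%C = sum_n (fun nu => f (S nu)) (2 * N)).
{ unfold node_sum. rewrite <- (sum_n_mult_l (K := C_Ring)). apply sum_n_ext. intros nu.
  unfold f, xnode. rewrite S_INR, Rmult_plus_distr_r, Rmult_1_l, Rplus_comm.
  symmetry. apply cexpiD. }
assert (Hf0 : f 0%nat = 1%C) by (unfold f, xnode; rewrite Rmult_0_l; apply cexpi_at_0).
assert (Hfn : f (S (2 * N)) = 1%C).
{ unfold f, xnode. replace (S (2 * N)) with (2 * N + 1)%nat by lia.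
  rewrite hN_nodes. apply cexpi_at_2PI. }
assert (E : plus (f 0%nat) (sum_n_m f 1 (S (2 * N))) = plus (node_sum N m) (f (S (2 * N)))).
{ rewrite <- sum_Sn_m by lia. apply sum_Sn. }
rewrite Hshift. unfold sum_n at 1. rewrite sum_n_m_S.
rewrite Hf0, Hfn in E. change ((1 + sum_n_m f 1 (S (2 * N)))%C = (node_sum N m + 1)%C) in E.
apply (f_equal (fun z => z - 1)%C) in E. ring_simplify in E. exact E.
Qed.

Lemma cos_neq_1 (th : R) : 0 < Rabs th < 2 * PI -> cos th <> 1.
Proof.
intros Hth Hc.
assert (Hs : sin (th / 2) = 0).
{ replace th with (2 * (th / 2)) in Hc by field. rewrite cos_2a_sin in Hc. nra. }
destruct (sin_eq_0_0 _ Hs) as [k Hk].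
destruct (Z.eq_dec k 0) as [->|Hk0].
- replace th with 0 in Hth by lra. rewrite Rabs_R0 in Hth. lra.
- assert (1 <= Rabs (IZR k)) by (rewrite <- abs_IZR; apply IZR_le; lia).
  replace th with (2 * IZR k * PI) in Hth by lra.
  rewrite !Rabs_mult, (Rabs_pos_eq 2), (Rabs_pos_eq PI) in Hth by (pose proof PI_RGT_0; lra).
  pose proof PI_RGT_0. nra.
Qed.

Lemma node_sum_vanish (N : nat) (m : Z) :
  m <> 0%Z -> (Z.abs m <= 2 * Z.of_nat N)%Z -> node_sum N m = 0%C.
Proof.
intros Hm Hmb.
assert (Hw : (cexpi m (hN N) - 1)%C <> 0%C).
{ intros Hw. apply (f_equal fst) in Hw. simpl in Hw.
  apply (cos_neq_1 (IZR m * hN N)); [|lra].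
  assert (Hm1 : 1 <= Rabs (IZR m)) by (rewrite <- abs_IZR; apply IZR_le; lia).
  assert (Hm2 : Rabs (IZR m) < INR (2 * N + 1)).
  { rewrite <- abs_IZR, INR_IZR_INZ. apply IZR_lt. lia. }
  pose proof (hN_pos N) as Hh.
  rewrite Rabs_mult, (Rabs_pos_eq (hN N)), <- (hN_nodes N) by lra. split; nra. }
assert (Hfix : ((cexpi m (hN N) - 1) * node_sum N m)%C = 0%C).
{ replace ((cexpi m (hN N) - 1) * node_sum N m)%C
    with (cexpi m (hN N) * node_sum N m - node_sum N m)%C by ring.
  rewrite node_sum_shift. ring. }
transitivity (/ (cexpi m (hN N) - 1) * ((cexpi m (hN N) - 1) * node_sum N m))%C.
- field. exact Hw.
- rewrite Hfix. ring.
Qed.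

Lemma dcoef_ext (N : nat) (f g : R -> C) (k : Z) :
  (forall x, f x = g x) -> dcoef N f k = dcoef N g k.
Proof. intros H. unfold dcoef. f_equal. apply sum_n_ext. intros nu. now rewrite H. Qed.

Lemma dcoef_plus (N : nat) (f g : R -> C) (k : Z) :
  dcoef N (fun x => (f x + g x)%C) k = (dcoef N f k + dcoef N g k)%C.
Proof.
unfold dcoef. rewrite !scal_R_Cmult, <- Cmult_plus_distr_l. f_equal.
rewrite <- (sum_n_plus (G := C_AbelianMonoid)). apply sum_n_ext. intros nu.
apply Cmult_plus_distr_r.
Qed.

Lemma dcoef_sum_n (N : nat) (F : nat -> R -> C) (n : nat) (k : Z) :
  dcoef N (fun x => sum_n (fun i => F i x) n) k = sum_n (fun i => dcoef N (F i) k) n.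
Proof.
induction n as [|n IH].
- rewrite sum_O. apply dcoef_ext. intros x. apply sum_O.
- rewrite sum_Sn, <- IH, <- dcoef_plus. apply dcoef_ext. intros x. exact (sum_Sn _ _).
Qed.

Lemma dcoef_cexpi (N : nat) (c : C) (m k : Z) :
  (Z.abs (m - k) <= 2 * Z.of_nat N)%Z ->
  dcoef N (fun x => (c * cexpi m x)%C) k = if Z.eq_dec m k then c else 0%C.
Proof.
intros Hmk.
assert (Hd : dcoef N (fun x => (c * cexpi m x)%C) k
             = (RtoC (hN N / (2 * PI)) * c * node_sum N (m - k))%C).
{ unfold dcoef, node_sum. rewrite scal_R_Cmult, <- Cmult_assoc. apply f_equal.
  rewrite <- (sum_n_mult_l (K := C_Ring)). apply sum_n_ext. intros nu.
  change (c * cexpi m (xnode N nu) * cexpi (- k) (xnode N nu)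
          = c * cexpi (m - k) (xnode N nu))%C.
  rewrite <- Cmult_assoc, <- cexpi_freqD. reflexivity. }
rewrite Hd. destruct (Z.eq_dec m k) as [<-|Hne].
- rewrite Z.sub_diag, node_sum_0, (Cmult_comm _ c), <- Cmult_assoc, <- RtoC_mult.
  replace (hN N / (2 * PI) * INR (2 * N + 1)) with 1.
  + apply Cmult_1_r.
  + rewrite <- (hN_nodes N). field. split; [apply Rgt_not_eq, hN_pos | apply not_0_INR; lia].
- rewrite node_sum_vanish by lia. apply Cmult_0_r.
Qed.

Lemma dcoef_trig (N : nat) (c : Z -> C) (k : Z) :
  (Z.abs k <= Z.of_nat N)%Z -> dcoef N (trig N c) k = c k.
Proof.
intros Hk. unfold trig, sumZN. rewrite dcoef_sum_n.
change (sumZN N (fun p => dcoef N (fun x => (c p * cexpi p x)%C) k) = c k).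
rewrite (sumZN_single N _ k Hk).
- rewrite dcoef_cexpi by lia. now destruct (Z.eq_dec k k).
- intros p Hp Hpk. rewrite dcoef_cexpi by lia. now destruct (Z.eq_dec p k).
Qed.

Lemma is_RInt_cexpi_nonzero (c : C) (q : Z) :
  q <> 0%Z ->
  is_RInt (V := C_R_NormedModule) (fun x => (c * cexpi q x)%C) 0 (2 * PI) (RtoC 0).
Proof.
intros Hq.
assert (Hik : Cik q <> 0%C).
{ intros E. apply (f_equal snd) in E. apply Hq, eq_IZR. exact E. }
replace (RtoC 0) with (minus (c * cexpi q (2 * PI) / Cik q) (c * cexpi q 0 / Cik q))%C.
2:{ rewrite cexpi_at_2PI, cexpi_at_0. change ((c * 1 / Cik q) - (c * 1 / Cik q) = 0)%C. ring. }
apply (is_RInt_derive (V := C_R_CompleteNormedModule)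
  (fun x => c * cexpi q x / Cik q)%C (fun x => c * cexpi q x)%C).
- intros x _.
  replace (c * cexpi q x)%C with (c * (Cik q * cexpi q x) / Cik q)%C by (field; exact Hik).
  apply is_derive_Cmult_r, is_derive_Cmult_l, is_derive_cexpi.
- intros x _. apply (ex_derive_continuous (K := R_AbsRing) (V := C_R_NormedModule)).
  eexists. apply is_derive_Cmult_l, is_derive_cexpi.
Qed.

Lemma fcoef_is_RInt (w : R -> C) (j : Z) (l : C) :
  is_RInt (V := C_R_NormedModule) (fun x => (w x * cexpi (- j) x)%C) 0 (2 * PI) l ->
  fcoef w j = (RtoC (/ (2 * PI)) * l)%C.
Proof.
intros Hl. unfold fcoef. rewrite scal_R_Cmult. f_equal.
apply injective_projections; simpl; apply (is_RInt_unique (V := R_CompleteNormedModule)).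
- exact (is_RInt_fct_extend_fst _ _ _ _ Hl).
- exact (is_RInt_fct_extend_snd _ _ _ _ Hl).
Qed.

(* The rectangle rule on the nodes computes the j-th Fourier integral of w exactly.  Carrying
   the integral itself, not only the coefficient, makes the property closed under sums. *)
Definition quadrature_exact (N : nat) (j : Z) (w : R -> C) : Prop :=
  is_RInt (V := C_R_NormedModule) (fun x => (w x * cexpi (- j) x)%C) 0 (2 * PI)
    (RtoC (2 * PI) * dcoef N w j)%C.

Lemma fcoef_quadrature_exact (N : nat) (j : Z) (w : R -> C) :
  quadrature_exact N j w -> fcoef w j = dcoef N w j.
Proof.
intros Hw. rewrite (fcoef_is_RInt _ _ _ Hw), Cmult_assoc, <- RtoC_mult, Rinv_l.
- apply Cmult_1_l.
- pose proof PI_RGT_0. lra.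
Qed.

Lemma quadrature_exact_ext (N : nat) (j : Z) (v w : R -> C) :
  (forall x, v x = w x) -> quadrature_exact N j v -> quadrature_exact N j w.
Proof.
intros H Hv. unfold quadrature_exact. rewrite <- (dcoef_ext N v w j H).
apply (is_RInt_ext (V := C_R_NormedModule) _ _ _ _ _
  (fun x _ => f_equal (fun z => z * _)%C (H x)) Hv).
Qed.

Lemma quadrature_exact_plus (N : nat) (j : Z) (v w : R -> C) :
  quadrature_exact N j v -> quadrature_exact N j w ->
  quadrature_exact N j (fun x => (v x + w x)%C).
Proof.
intros Hv Hw. unfold quadrature_exact. rewrite dcoef_plus, Cmult_plus_distr_l.
apply (is_RInt_ext (V := C_R_NormedModule)
  (fun x => plus (v x * cexpi (- j) x) (w x * cexpi (- j) x))%C).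
- intros x _. symmetry. apply Cmult_plus_distr_r.
- now apply (is_RInt_plus (V := C_R_NormedModule)).
Qed.

Lemma quadrature_exact_sum_n (N : nat) (j : Z) (F : nat -> R -> C) (n : nat) :
  (forall i, (i <= n)%nat -> quadrature_exact N j (F i)) ->
  quadrature_exact N j (fun x => sum_n (fun i => F i x) n).
Proof.
intros HF. induction n as [|n IH].
- apply (quadrature_exact_ext N j (F 0%nat)); [intros; symmetry; apply sum_O | apply HF; lia].
- apply (quadrature_exact_ext N j (fun x => sum_n (fun i => F i x) n + F (S n) x)%C).
  + intros x. symmetry. exact (sum_Sn _ _).
  + apply quadrature_exact_plus; [apply IH; intros; apply HF | apply HF]; lia.
Qed.

Lemma quadrature_exact_cexpi (N : nat) (j : Z) (c : C) (m : Z) :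
  (Z.abs (m - j) <= 2 * Z.of_nat N)%Z -> quadrature_exact N j (fun x => (c * cexpi m x)%C).
Proof.
intros Hmj. unfold quadrature_exact. rewrite dcoef_cexpi by exact Hmj.
apply (is_RInt_ext (V := C_R_NormedModule) (fun x => c * cexpi (m - j) x)%C).
{ intros x _. rewrite <- Cmult_assoc, <- cexpi_freqD. reflexivity. }
destruct (Z.eq_dec m j) as [<-|Hne].
- rewrite Z.sub_diag. apply (is_RInt_ext (V := C_R_NormedModule) (fun _ => c)).
  + intros x _. rewrite cexpi_freq_0. symmetry. apply Cmult_1_r.
  + replace (RtoC (2 * PI) * c)%C with (scal (2 * PI - 0) c)
      by (rewrite scal_R_Cmult; f_equal; f_equal; ring).
    apply (is_RInt_const (V := C_R_NormedModule)).
- rewrite Cmult_0_r. apply is_RInt_cexpi_nonzero. lia.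
Qed.

Lemma in_m_bound (N : nat) (k : Z) : in_m N k = true -> (3 * Z.abs k <= 2 * Z.of_nat N)%Z.
Proof. apply Z.leb_le. Qed.

Lemma quadrature_exact_dealias_mul (N : nat) (a b : Z -> C) (j : Z) :
  in_m N j = true ->
  quadrature_exact N j (fun x => (trig N (dealias N a) x * trig N (dealias N b) x)%C).
Proof.
intros Hj. apply in_m_bound in Hj.
apply (quadrature_exact_ext N j _ _ (fun x => eq_sym (trig_mul N _ _ x))).
apply quadrature_exact_sum_n. intros i _.
apply quadrature_exact_sum_n. intros i' _.
set (p := (Z.of_nat i - Z.of_nat N)%Z). set (q := (Z.of_nat i' - Z.of_nat N)%Z).
unfold dealias. destruct (in_m N p) eqn:Hp, (in_m N q) eqn:Hq.
1: apply in_m_bound in Hp, Hq; apply quadrature_exact_cexpi; lia.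
all: apply (quadrature_exact_ext N j (fun x => 0 * cexpi j x)%C); [intros; ring|].
all: apply quadrature_exact_cexpi; lia.
Qed.

Lemma is_derive_dcoef (N : nat) (F : R -> R -> C) (D : R -> C) (k : Z) (t : R) :
  (forall y, is_derive (F y) t (D y)) ->
  is_derive (fun s => dcoef N (fun y => F y s) k) t (dcoef N D k).
Proof.
intros HF. unfold dcoef. rewrite scal_R_Cmult.
apply (is_derive_ext (fun s => RtoC (hN N / (2 * PI))
        * sum_n (fun nu => F (xnode N nu) s * cexpi (- k) (xnode N nu)) (2 * N))%C).
{ intros s. symmetry. apply scal_R_Cmult. }
apply is_derive_Cmult_l.
apply (is_derive_sum_n (fun nu s => F (xnode N nu) s * cexpi (- k) (xnode N nu))%C).
intros nu _. apply is_derive_Cmult_r, HF.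
Qed.

Lemma is_derive_trig_coef (N : nat) (c : Z -> R -> C) (d : Z -> C) (k : Z) (t : R) :
  (forall y, is_derive (fun s => trig N (fun p => c p s) y) t (trig N d y)) ->
  (Z.abs k <= Z.of_nat N)%Z -> is_derive (c k) t (d k).
Proof.
intros H Hk. rewrite <- (dcoef_trig N d k Hk).
apply (is_derive_ext (fun s => dcoef N (trig N (fun p => c p s)) k)).
{ intros s. now apply dcoef_trig. }
exact (is_derive_dcoef N (fun y s => trig N (fun p => c p s) y) _ k t H).
Qed.

Lemma fcoef_Su_sq (N : nat) (sigma : Z -> R) (uhat : Z -> R -> C) (t : R) (k : Z) :
  in_m N k = true ->
  fcoef (fun z => Su N sigma uhat z t * Su N sigma uhat z t)%C k
  = dcoef N (fun z => Su N sigma uhat z t * Su N sigma uhat z t)%C k.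
Proof.
intros Hk. apply fcoef_quadrature_exact.
set (a := fun p => (RtoC (sigma p) * uhat p t)%C).
apply (quadrature_exact_ext N k (fun z => trig N (dealias N a) z * trig N (dealias N a) z)%C).
- intros z. now rewrite Su_trig.
- now apply quadrature_exact_dealias_mul.
Qed.

Lemma burgers_eq_at_trig (v F : R -> R -> C) (N : nat) (b : Z -> C) (x t : R) :
  (forall y, F y t = trig N b y) ->
  burgers_eq_at v F x t
  <-> is_derive (fun s => v x s) t (- RtoC (/ 2) * trig N (fun k => Cik k * b k) x)%C.
Proof.
intros HF.
assert (HFx : is_derive (fun y => F y t) x (trig N (fun k => Cik k * b k) x)%C).
{ apply (is_derive_ext (trig N b)); [intros y; symmetry; apply HF | apply is_derive_trig]. }
split.
- intros (a & d & Ha & Hd & Had).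
  rewrite (is_derive_C_unique _ _ _ _ Hd HFx) in Had.
  replace (- RtoC (/ 2) * _)%C with a; [exact Ha|].
  set (T := trig N _ x) in *.
  replace a with (a + RtoC (/ 2) * T - RtoC (/ 2) * T)%C by ring.
  rewrite Had. ring.
- intros Hv. exists (- RtoC (/ 2) * trig N (fun k => Cik k * b k) x)%C.
  exists (trig N (fun k => Cik k * b k)%C x).
  split; [exact Hv | split; [exact HFx | ring]].
Qed.

Lemma collocation_coef_deriv (N : nat) (uhat : Z -> R -> C) (W : R -> R -> C) (t : R) :
  (forall y, burgers_eq_at (uNfun N uhat) (fun z s => interpN N (W s) z) y t) ->
  forall k, (Z.abs k <= Z.of_nat N)%Z ->
  is_derive (uhat k) t (- RtoC (/ 2) * (Cik k * dcoef N (W t) k))%C.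
Proof.
intros H k Hk.
apply (is_derive_trig_coef N uhat (fun p => - RtoC (/ 2) * (Cik p * dcoef N (W t) p))%C);
  [intros y | exact Hk].
rewrite <- trig_scal.
apply (burgers_eq_at_trig (uNfun N uhat) (fun z s => interpN N (W s) z) N (dcoef N (W t)) y t).
- intros z. reflexivity.
- apply H.
Qed.

Theorem corollary3p2 (N : nat) (sigma : Z -> R) (uhat : Z -> R -> C) :
  (1 <= N)%nat ->
  smoothing_factors N sigma ->
  forall t : R,
    (forall x : R,
       burgers_eq_at (uNfun N uhat)
         (fun y s => interpN N (fun z => (Su N sigma uhat z s * Su N sigma uhat z s)%C) y)
         x t) ->
    forall x : R,
      burgers_eq_at (Su N sigma uhat)
        (fun y s => smoothS N sigma (fun z => (Su N sigma uhat z s * Su N sigma uhat z s)%C) y)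
        x t.
Proof.
intros _ _ t H x.
pose proof (collocation_coef_deriv N uhat
  (fun s z => Su N sigma uhat z s * Su N sigma uhat z s)%C t H) as Hu.
set (w := fun z => (Su N sigma uhat z t * Su N sigma uhat z t)%C) in *.
apply (burgers_eq_at_trig _ _ N (dealias N (fun p => RtoC (sigma p) * fcoef w p)%C)).
{ intros y. apply smoothS_trig. }
apply (is_derive_ext (fun s => trig N (dealias N (fun p => RtoC (sigma p) * uhat p s)%C) x)).
{ intros s. symmetry. apply Su_trig. }
rewrite trig_scal. apply is_derive_trig_coefs. intros k Hk. unfold dealias.
destruct (in_m N k) eqn:Hm.
- replace (fcoef w k) with (dcoef N w k)
    by (symmetry; exact (fcoef_Su_sq N sigma uhat t k Hm)).
  replace (- RtoC (/ 2) * _)%C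
    with (RtoC (sigma k) * (- RtoC (/ 2) * (Cik k * dcoef N w k)))%C by ring.
  apply is_derive_Cmult_l, Hu, Hk.
- rewrite !Cmult_0_r. apply (is_derive_const (K := R_AbsRing) (V := C_R_NormedModule)).
Qed.
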